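(* For any single-elimination tournament $\mathcal{T}$ and any two distinct players $a,b$, there exists a unique match $x$ of $\mathcal{T}$ which has in-neighbours $u_a,u_b\in N^-(x)$ satisfying $P(u_a)\cap\{a,b\}=\{a\}$ and $P(u_b)\cap\{a,b\}=\{b\}$.
   Context: A single-elimination tournament is a finite directed graph $\mathcal{T}$ such that: (a) $\mathcal{T}$ has exactly one sink (vertex with no out-neighbours); (b) every non-sink vertex has exactly one out-neighbour; (c) $\mathcal{T}$ has no directed cycles; (d) $|N^-(v)|\ne 1$ for every vertex $v$, where $N^-(v)$ denotes the set of in-neighbours of $v$. The players are the sources (vertices with no in-neighbours) and the matches are the non-source vertices. For a vertex $u$, $P(u)$ is the set of players $a$ for which there is a directed walk from $a$ to $u$ (a sequence $(u_1,\dots,u_t)$, $t\ge1$, $u_1=a$, $u_t=u$, each $u_{i+1}$ an out-neighbour of $u_i$). *)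

(* A finite directed graph is a finType T with an edge relation
   e : rel T (e u v means there is an arc u -> v). *)
From mathcomp Require Import all_boot.
Set Implicit Arguments. Unset Strict Implicit. Unset Printing Implicit Defensive.

Section Tournament.
Variables (T : finType) (e : rel T).

Definition Nout (v : T) : {set T} := [set w | e v w].
Definition Nin (v : T) : {set T} := [set u | e u v].

Definition is_sink (v : T) : bool := Nout v == set0.
Definition is_source (v : T) : bool := Nin v == set0.

Definition player (v : T) : bool := is_source v.
Definition match_ (v : T) : bool := ~~ is_source v.

(* a directed walk (u_1,...,u_t), t >= 1, from a to u exists iff connect e a u
   (reflexive-transitive closure of e) *)
Definition P (u : T) : {set T} := [set a | player a && connect e a u].

(* directed cycle: an arc u -> v with a directed walk back from v to u *)
Definition acyclic : Prop := forall u v : T, e u v -> ~~ connect e v u.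

Definition single_elim_tournament : Prop :=
  [/\ #|[set v | is_sink v]| = 1,
      (forall v, ~~ is_sink v -> #|Nout v| = 1),
      acyclic
    & (forall v, #|Nin v| != 1)].

End Tournament.

(* Out-degrees are at most one, so the descendants of any vertex form a chain
   under reachability, and acyclicity makes this chain a strict order.  Both
   players reach the unique sink, so they have a first common descendant x.
   The last vertices on the walks from a and from b to x are in-neighbours of
   x that separate a from b.  Conversely, let u be an in-neighbour of a match
   y that is reached from a but not from b.  Then x does not reach u, so u
   reaches x strictly and hence so does its successor y; but y is a common
   descendant of a and b, so x reaches y, and y = x. *)
From mathcomp Require Import all_boot.
Set Implicit Arguments. Unset Strict Implicit. Unset Printing Implicit Defensive.

Section Reachability.
Variables (T : finType) (e : rel T).

Lemma connect_first_step u v :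
  connect e u v -> u != v -> exists2 y, e u y & connect e y v.
Proof.
move=> /connectP [[|y p] /= walk_p ->]; first by rewrite eqxx.
by case/andP: walk_p => uy walk_p _; exists y => //; apply/connectP; exists p.
Qed.

Lemma connect_last_step u v :
  connect e u v -> u != v -> exists2 z, connect e u z & e z v.
Proof.
move=> /connectP [p + ->]; case/lastP: p => [|p y]; first by rewrite /= eqxx.
rewrite rcons_path last_rcons => /andP [walk_p last_p] _.
by exists (last u p) => //; apply/connectP; exists p.
Qed.

Lemma source_connect p u : is_source e p -> connect e u p -> u = p.
Proof.
move=> /eqP/setP src_p up; apply/eqP/negPn/negP => u_neq_p.
have [z _ zp] := connect_last_step up u_neq_p.
by have := src_p z; rewrite !inE zp.
Qed.

Definition descendants v : {set T} := [set w | connect e v w].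

Definition meeting_point a b x :=
  [/\ connect e a x, connect e b x
    & forall y, connect e a y -> connect e b y -> connect e x y].

Lemma meeting_pointC a b x : meeting_point a b x -> meeting_point b a x.
Proof. by case=> ax bx x_least; split=> // y by_ ay; apply: x_least. Qed.

Lemma meeting_point_source_neq a b x :
  is_source e a -> a != b -> meeting_point a b x -> a != x.
Proof.
move=> src_a a_neq_b [_ bx _]; apply: contra_neq a_neq_b => ax.
by apply/esym/(source_connect src_a); rewrite ax.
Qed.

Section Acyclic.
Hypothesis e_acyclic : acyclic e.

Lemma connect_antisym u v : connect e u v -> connect e v u -> u = v.
Proof.
move=> uv vu; apply/eqP/negPn/negP => u_neq_v.
have [y uy yv] := connect_first_step uv u_neq_v.
by have := e_acyclic uy; rewrite (connect_trans yv vu).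
Qed.

Lemma card_descendants_lt u v :
  connect e u v -> u != v -> #|descendants v| < #|descendants u|.
Proof.
move=> uv u_neq_v; apply: proper_card; apply/properP; split.
  by apply/subsetP => w; rewrite !inE; apply: connect_trans.
exists u; rewrite !inE ?connect0 //; apply/negP => vu.
by rewrite (connect_antisym uv vu) eqxx in u_neq_v.
Qed.

Lemma connect_sink v : exists2 s, is_sink e s & connect e v s.
Proof.
have [s vs s_min] := arg_minnP (fun w => #|descendants w|) (connect0 e v).
exists s => //; apply/set0Pn => -[w]; rewrite inE => sw.
have s_neq_w : s != w by apply: contraTneq (e_acyclic sw) => <-; rewrite connect0.
have := s_min w (connect_trans vs (connect1 sw)).
by rewrite leqNgt card_descendants_lt ?connect1.
Qed.

Section Functional.
Hypothesis e_functional : forall u v w, e u v -> e u w -> v = w.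

Lemma connect_succ u v w : e u v -> connect e u w -> u != w -> connect e v w.
Proof.
by move=> uv uw u_neq_w; have [y uy yw] := connect_first_step uw u_neq_w;
  rewrite (e_functional uv uy).
Qed.

Lemma connect_chain a u v :
  connect e a u -> connect e a v -> connect e u v || connect e v u.
Proof.
move=> /connectP [p + ->]; elim: p a => [|y p IHp] a /=; first by move=> _ ->.
case/andP=> ay walk_p av; have [<-|a_neq_v] := eqVneq a v.
  by rewrite orbC (connect_trans (connect1 ay)) //; apply/connectP; exists p.
exact/IHp/(connect_succ ay).
Qed.

Lemma meeting_point_exists a b c :
  connect e a c -> connect e b c -> exists x, meeting_point a b x.
Proof.
move=> ac bc; pose common := [pred w | connect e a w && connect e b w].
have common_c : common c by rewrite /= ac bc.
have [x /andP [ax bx] x_max] := arg_maxnP (fun w => #|descendants w|) common_c.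
exists x; split=> // y ay by_; case/orP: (connect_chain ax ay) => // yx.
have [-> // | y_neq_x] := eqVneq y x.
have := x_max y; rewrite /= ay by_ => /(_ isT).
by rewrite /= leqNgt card_descendants_lt.
Qed.

Lemma meeting_point_in_neighbour a b x :
  meeting_point a b x -> a != x ->
  exists2 u, e u x & connect e a u && ~~ connect e b u.
Proof.
case=> ax _ x_least a_neq_x; have [u au ux] := connect_last_step ax a_neq_x.
exists u; rewrite // au /=; apply/negP => bu.
by have := e_acyclic ux; rewrite x_least.
Qed.

Lemma meeting_point_unique a b x u y :
  meeting_point a b x -> e u y -> connect e a u -> ~~ connect e b u ->
  connect e b y -> y = x.
Proof.
case=> ax bx x_least uy au not_bu by_.
have xy : connect e x y by apply: x_least; rewrite // (connect_trans au (connect1 uy)).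
apply: connect_antisym _ xy; case/orP: (connect_chain ax au) => [xu | ux].
  by rewrite (connect_trans bx xu) in not_bu.
by apply: connect_succ uy ux _; apply: contraNneq not_bu => ->.
Qed.

End Functional.
End Acyclic.

Lemma tournament_functional :
  single_elim_tournament e -> forall u v w, e u v -> e u w -> v = w.
Proof.
case=> _ out1 _ _ u v w uv uw.
have /cards1P [z Nout_u] : #|Nout e u| == 1.
  by rewrite out1 //; apply/set0Pn; exists v; rewrite inE.
have : v \in Nout e u by rewrite inE.
have : w \in Nout e u by rewrite inE.
by rewrite Nout_u !inE => /eqP -> /eqP ->.
Qed.

Lemma connect_common_sink :
  single_elim_tournament e -> forall a b, exists2 s, connect e a s & connect e b s.
Proof.
case=> /eqP/cards1P [r sinks] _ e_acyclic _ a b.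
have [sa sink_sa asa] := connect_sink e_acyclic a.
have [sb sink_sb bsb] := connect_sink e_acyclic b.
have : sa \in [set v | is_sink e v] by rewrite inE.
have : sb \in [set v | is_sink e v] by rewrite inE.
by rewrite sinks !inE => /eqP sb_r /eqP sa_r; exists sa; rewrite // sa_r -sb_r.
Qed.

Lemma separates_pair a b u :
  player e a -> player e b -> a != b ->
  (P e u :&: [set a; b] == [set a]) = connect e a u && ~~ connect e b u.
Proof.
move=> pa pb a_neq_b; apply/eqP/andP => [/setP sep | [au not_bu]].
  have := sep a; have := sep b; rewrite !inE !eqxx orbT eq_sym (negbTE a_neq_b).
  by rewrite pa pb /= !andbT => -> ->.
apply/setP => w; rewrite !inE; have [-> | _] := eqVneq w a; first by rewrite pa au.
by have [-> | _] := eqVneq w b; rewrite ?(negbTE not_bu) ?andbF.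
Qed.

End Reachability.

Theorem lemma4p2 (T : finType) (e : rel T) :
  single_elim_tournament e ->
  forall a b : T, player e a -> player e b -> a != b ->
  exists! x : T, match_ e x /\
    exists ua ub : T, [/\ ua \in Nin e x, ub \in Nin e x,
      P e ua :&: [set a; b] = [set a] & P e ub :&: [set a; b] = [set b]].
Proof.
move=> tour a b pa pb a_neq_b; have b_neq_a : b != a by rewrite eq_sym.
have e_functional := tournament_functional tour.
have [_ _ e_acyclic _] := tour.
have [s as_ bs] := connect_common_sink tour a b.
have [x x_meet] := meeting_point_exists e_acyclic e_functional as_ bs.
have sep_a u := separates_pair u pa pb a_neq_b.
have sep_b u : (P e u :&: [set a; b] == [set b]) = connect e b u && ~~ connect e a u.
  by rewrite setUC; apply: separates_pair.
have a_neq_x := meeting_point_source_neq pa a_neq_b x_meet.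
have b_neq_x := meeting_point_source_neq pb b_neq_a (meeting_pointC x_meet).
have [ua uax sep_ua] := meeting_point_in_neighbour e_acyclic x_meet a_neq_x.
have [ub ubx sep_ub] :=
  meeting_point_in_neighbour e_acyclic (meeting_pointC x_meet) b_neq_x.
exists x; split.
  split; first by apply/set0Pn; exists ua; rewrite inE.
  by exists ua, ub; rewrite !inE uax ubx; split; apply/eqP; rewrite ?sep_a ?sep_b.
move=> y [_ [ua' [ub' [/[!inE] ua'y ub'y /eqP/[!sep_a]/andP [aua' not_bua'] /eqP]]]].
rewrite sep_b => /andP [bub' _]; apply: esym.
exact: meeting_point_unique x_meet ua'y aua' not_bua' (connect_trans bub' (connect1 ub'y)).
Qed.
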